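(* Let $n \ge 3$ and let $\vec{x} = [x_t]_{t=0}^{n-1}$ and $\vec{q} = [q_t]_{t=0}^{n-1}$ be real-valued sequences, with discrete Fourier transforms $\vec{X}$ and $\vec{Q}$ defined by $$X_f = \frac{1}{\sqrt{n}} \sum_{t=0}^{n-1} x_t e^{-j 2\pi t f / n}, \qquad Q_f = \frac{1}{\sqrt{n}} \sum_{t=0}^{n-1} q_t e^{-j 2\pi t f / n}, \qquad f = 0, 1, \ldots, n-1,$$ where $j = \sqrt{-1}$. Let $D(\vec{x},\vec{q}) = \left(\sum_{t=0}^{n-1} |x_t - q_t|^2\right)^{1/2}$ be the Euclidean distance, and let $\epsilon > 0$. Let $k$ be an integer with $1 \le k < n/2$. If $D(\vec{x},\vec{q}) < \epsilon$, then $|X_0 - Q_0| < \epsilon$ and $$|X_f - Q_f| < \frac{\epsilon}{\sqrt{2}} \qquad \text{for all } f = 1, \ldots, k.$$ In particular, the axis-parallel box in the feature space of the first $k+1$ DFT coefficients that is centered at $(Q_0, Q_1, \ldots, Q_k)$ and has side $2\epsilon$ in the coordinate of $X_0$ and side $\sqrt{2}\,\epsilon$ in each real coordinate of $X_1, \ldots, X_k$ contains $(X_0, X_1, \ldots, X_k)$ for every $\vec{x}$ with $D(\vec{x},\vec{q}) < \epsilon$.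
   Context: The time sequences are real-valued. The real coordinates of a complex coefficient $X_f$ are its real and imaginary parts. For a real-valued sequence, $X_0$ is a real number. *)

From HB Require Import structures.
From mathcomp Require Import all_boot all_order all_algebra.
From mathcomp Require Import all_classical all_reals.
From mathcomp Require Import trigo.
From mathcomp Require Import complex.
Set Implicit Arguments. Unset Strict Implicit. Unset Printing Implicit Defensive.
Import Order.TTheory GRing.Theory Num.Theory.
Local Open Scope ring_scope.

Definition expj (R : realType) (theta : R) : R[i] := Complex (cos theta) (sin theta).

Definition dft (R : realType) (n : nat) (x : 'I_n -> R) (f : nat) : R[i] :=
  ((Num.sqrt (n%:R : R))^-1)%:C%C *
  \sum_(t < n) (x t)%:C%C * expj (- (2 * pi * (t%:R) * (f%:R) / (n%:R)) : R).

Definition eucl_dist (R : realType) (n : nat) (x q : 'I_n -> R) : R :=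
  Num.sqrt (\sum_(t < n) `|x t - q t| ^+ 2).

Definition cmod (R : realType) (z : R[i]) : R := Normc.normc z.

From HB Require Import structures.
From mathcomp Require Import all_boot all_order all_algebra.
From mathcomp Require Import all_classical all_reals.
From mathcomp Require Import trigo.
From mathcomp Require Import complex.
From mathcomp Require Import ring lra.
Set Implicit Arguments.
Unset Strict Implicit.
Unset Printing Implicit Defensive.
Import Order.TTheory GRing.Theory Num.Theory.
Local Open Scope ring_scope.

(* By linearity X_f - Q_f is the DFT of d = x - q, and
   n |X_f - Q_f|^2 = (d . c)^2 + (d . s)^2 with c_t = cos (t th), s_t = sin (t th),
   th = -2 pi f / n.  For 0 < 2f < n the vectors c and s are orthogonal with
   squared norm n/2 each, since cos and sin of t (2 th) sum to zero over t < n;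
   Bessel's inequality then gives 2 |X_f - Q_f|^2 <= D(x,q)^2.  For f = 0 we have
   c = 1 and s = 0, and the same inequality is Cauchy-Schwarz:
   |X_0 - Q_0|^2 <= D(x,q)^2. *)

Section Bessel.
Variables (R : realFieldType) (n : nat) (d c s : 'I_n -> R).

(* With [x / 0 = 0] this also holds when [c] or [s] is zero. *)
Lemma bessel_orthogonal2 : \sum_t c t * s t = 0 ->
  (\sum_t d t * c t) ^+ 2 / \sum_t c t ^+ 2 +
  (\sum_t d t * s t) ^+ 2 / \sum_t s t ^+ 2 <= \sum_t d t ^+ 2.
Proof.
move=> cs0.
set A := \sum_t d t * c t; set B := \sum_t d t * s t.
set Nc := \sum_t c t ^+ 2; set Ns := \sum_t s t ^+ 2.
set a := A / Nc; set b := B / Ns.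
have proj_coef (X N : R) : (X / N) ^+ 2 * N - 2 * (X / N) * X = - (X ^+ 2 / N).
  have [->|N0] := eqVneq N 0; first by rewrite !(invr0, mulr0, mul0r, subr0, oppr0).
  by field.
have expand : \sum_t (d t - a * c t - b * s t) ^+ 2 = \sum_t d t ^+ 2
    + (-2 * a) * A + (-2 * b) * B + a ^+ 2 * Nc + b ^+ 2 * Ns
    + (2 * a * b) * \sum_t c t * s t.
  rewrite /A /B /Nc /Ns !mulr_sumr -!big_split /=.
  by apply: eq_bigr => t _; ring.
have : 0 <= \sum_t (d t - a * c t - b * s t) ^+ 2.
  by apply: sumr_ge0 => t _; apply: sqr_ge0.
rewrite expand cs0 mulr0 addr0.
have := proj_coef A Nc; have := proj_coef B Ns; rewrite -/a -/b.
lra.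
Qed.
End Bessel.

Section TrigSums.
Variable R : realType.
Implicit Types (h : R) (n : nat).

Lemma sum_cos_sin_mul2_eq0 h n : sin h != 0 -> sin (n%:R * h) = 0 ->
  \sum_(t < n) cos (t%:R * (2 * h)) = 0 /\ \sum_(t < n) sin (t%:R * (2 * h)) = 0.
Proof.
move=> sh0 snh0.
have nh2 : n%:R * (2 * h) = (n%:R * h) *+ 2 by rewrite mulr2n; ring.
have cos_n : cos (n%:R * (2 * h)) = 1.
  by rewrite nh2 cos_mulr2n cos2sin2 snh0 expr0n subr0 mulr2n; lra.
have sin_n : sin (n%:R * (2 * h)) = 0 by rewrite nh2 sin_mulr2n snh0 mulr0 mul0rn.
pose g (t : nat) := t%:R * (2 * h) - h.
have gS t : g t.+1 = t%:R * (2 * h) + h by rewrite /g -addn1 natrD; ring.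
have sh2 : 2 * sin h != 0 by rewrite mulf_eq0 negb_or sh0 andbT; apply/eqP; lra.
(* 2 sin h cos (2th) and 2 sin h sin (2th) are differences of consecutive values
   of sin and - cos at the odd multiples (2t - 1) h. *)
split; apply: (mulIf sh2); rewrite mul0r mulr_suml.
- rewrite -(big_mkord xpredT (fun t => cos (t%:R * (2 * h)) * (2 * sin h))).
  rewrite (telescope_sumr_eq (fun t => sin (g t))) //; last first.
    by move=> t _; rewrite gS /g sinD sinB; ring.
  by rewrite /g mul0r add0r sinN sinB cos_n sin_n; ring.
- rewrite -(big_mkord xpredT (fun t => sin (t%:R * (2 * h)) * (2 * sin h))).
  rewrite (telescope_sumr_eq (fun t => - cos (g t))) //; last first.
    by move=> t _; rewrite gS /g cosD cosB; ring.
  by rewrite /g mul0r add0r cosN cosB cos_n sin_n; ring.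
Qed.

Lemma sum_cos_sin_sqr h n : sin h != 0 -> sin (n%:R * h) = 0 ->
  [/\ \sum_(t < n) cos (t%:R * h) ^+ 2 = n%:R / 2,
      \sum_(t < n) sin (t%:R * h) ^+ 2 = n%:R / 2 &
      \sum_(t < n) cos (t%:R * h) * sin (t%:R * h) = 0].
Proof.
move=> sh0 snh0; have [sum_cos sum_sin] := sum_cos_sin_mul2_eq0 sh0 snh0.
have double t : t%:R * (2 * h) = (t%:R * h) *+ 2 by rewrite mulr2n; ring.
have cos_sqr t : cos (t%:R * h) ^+ 2 = (1 + cos (t%:R * (2 * h))) / 2.
  by rewrite double cos_mulr2n mulr2n; field.
have cos_sin t : cos (t%:R * h) * sin (t%:R * h) = sin (t%:R * (2 * h)) / 2.
  by rewrite double sin_mulr2n mulr2n; field.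
have sum_cos2 : \sum_(t < n) cos (t%:R * h) ^+ 2 = n%:R / 2.
  under eq_bigr do rewrite cos_sqr.
  by rewrite -mulr_suml big_split /= sum_cos addr0 sumr_const card_ord.
split=> //.
  under eq_bigr do rewrite sin2cos2.
  by rewrite sumrB sum_cos2 sumr_const card_ord; field.
under eq_bigr do rewrite cos_sin.
by rewrite -mulr_suml sum_sin mul0r.
Qed.
End TrigSums.

Section RealComplex.
Variable R : realType.
Implicit Types z : R[i].

Lemma big_Complex n (F G : 'I_n -> R) :
  \sum_t Complex (F t) (G t) = Complex (\sum_t F t) (\sum_t G t).
Proof. by apply: (big_rec3 (fun z a b => z = Complex a b)) => // t z a b _ ->. Qed.

Lemma mul_real_Complex (a b c : R) : (a%:C * Complex b c)%C = Complex (a * b) (a * c).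
Proof.
change (Complex (a * b - 0 * c) (a * c + 0 * b) = Complex (a * b) (a * c)).
by rewrite !mul0r subr0 addr0.
Qed.

Lemma ReB z w : complex.Re (z - w) = complex.Re z - complex.Re w.
Proof. by case: z; case: w. Qed.

Lemma ImB z w : complex.Im (z - w) = complex.Im z - complex.Im w.
Proof. by case: z; case: w. Qed.

Lemma normr_Re_le_cmod z : `|complex.Re z| <= cmod z.
Proof. by case: z => a b /=; rewrite -sqrtr_sqr ler_sqrt ?lerDl ?addr_ge0 ?sqr_ge0. Qed.

Lemma normr_Im_le_cmod z : `|complex.Im z| <= cmod z.
Proof. by case: z => a b /=; rewrite -sqrtr_sqr ler_sqrt ?lerDr ?addr_ge0 ?sqr_ge0. Qed.

Lemma cmod_lt_div_sqrt z (m S eps : R) : 0 < m ->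
  m * cmod z ^+ 2 <= S -> Num.sqrt S < eps -> cmod z < eps / Num.sqrt m.
Proof.
move=> m_gt0 le_S lt_eps.
have cmod_ge0 : 0 <= cmod z by case: (z) => a b; apply: sqrtr_ge0.
rewrite ltr_pdivlMr ?sqrtr_gt0 // -(ger0_norm cmod_ge0) -sqrtr_sqr -sqrtrM ?sqr_ge0 //.
have S_ge0 : 0 <= S := le_trans (mulr_ge0 (ltW m_gt0) (sqr_ge0 _)) le_S.
by rewrite (le_lt_trans _ lt_eps) // ler_sqrt // mulrC.
Qed.

Lemma cmod_Re_Im_lt z (m S eps : R) : 0 < m ->
    m * cmod z ^+ 2 <= S -> Num.sqrt S < eps ->
  [/\ cmod z < eps / Num.sqrt m, `|complex.Re z| < eps / Num.sqrt m &
      `|complex.Im z| < eps / Num.sqrt m].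
Proof.
move=> m_gt0 le_S /(cmod_lt_div_sqrt m_gt0 le_S) lt_eps.
by split=> //; apply: le_lt_trans lt_eps; [apply: normr_Re_le_cmod | apply: normr_Im_le_cmod].
Qed.
End RealComplex.

Section DFT.
Variable R : realType.

Definition dft_angle (n f : nat) : R := - (2 * pi * f%:R / n%:R).

Lemma dft_angle0 n : dft_angle n 0 = 0.
Proof. by rewrite /dft_angle mulr0 mul0r oppr0. Qed.

Lemma sin_dft_angle_neq0 n f : (0 < f)%N -> (f.*2 < n)%N -> sin (dft_angle n f) != 0.
Proof.
move=> f_gt0 f2n; have n_gt0 : (0 < n)%N := leq_ltn_trans (leq0n _) f2n.
rewrite sinN oppr_eq0 gt_eqF // sin_gt0_pi // divr_gt0 ?mulr_gt0 ?pi_gt0 ?ltr0n //=.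
rewrite ltr_pdivrMr ?ltr0n // mulrAC [pi * _]mulrC ltr_pM2r ?pi_gt0 //.
by rewrite -natrM ltr_nat mul2n.
Qed.

Lemma sin_natmul_dft_angle n f : (0 < n)%N -> sin (n%:R * dft_angle n f) = 0.
Proof.
move=> n_gt0; have n0 : (n%:R : R) != 0 by rewrite pnatr_eq0 -lt0n.
have -> : n%:R * dft_angle n f = - ((pi *+ 2) *+ f).
  by rewrite /dft_angle -mulr_natr -[pi *+ 2]mulr_natr; field.
by rewrite sinN -[_ *+ f]add0r (periodicn (@sinD2pi R)) sin0 oppr0.
Qed.

Lemma dftE n (x : 'I_n -> R) f : dft x f =
  Complex ((Num.sqrt n%:R)^-1 * \sum_t x t * cos (t%:R * dft_angle n f))
          ((Num.sqrt n%:R)^-1 * \sum_t x t * sin (t%:R * dft_angle n f)).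
Proof.
rewrite /dft -mul_real_Complex -big_Complex; congr (_ * _).
apply: eq_bigr => t _; rewrite /expj mul_real_Complex /dft_angle.
by congr (Complex (_ * cos _) (_ * sin _)); ring.
Qed.

Lemma dftB n (x q : 'I_n -> R) f : dft x f - dft q f = dft (fun t => x t - q t) f.
Proof.
rewrite !dftE /=; congr Complex; rewrite -mulrBr -sumrB;
  by congr (_ * _); apply: eq_bigr => t _; rewrite mulrBl.
Qed.

Lemma cmod_dft_sqr n (d : 'I_n -> R) f : cmod (dft d f) ^+ 2 =
  ((\sum_t d t * cos (t%:R * dft_angle n f)) ^+ 2 +
   (\sum_t d t * sin (t%:R * dft_angle n f)) ^+ 2) / n%:R.
Proof.
rewrite dftE /cmod /= sqr_sqrtr ?addr_ge0 ?sqr_ge0 // !exprMn exprVn.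
by rewrite sqr_sqrtr ?ler0n // mulrDl !(mulrC _^-1).
Qed.

Lemma cmod_dft0_sqr_le n (d : 'I_n -> R) : cmod (dft d 0) ^+ 2 <= \sum_t d t ^+ 2.
Proof.
have sin_eq0 (t : 'I_n) : sin (t%:R * dft_angle n 0) = 0.
  by rewrite dft_angle0 mulr0 sin0.
have cos_sqr_sum : \sum_(t < n) cos (t%:R * dft_angle n 0) ^+ 2 = n%:R.
  rewrite (eq_bigr (fun _ => 1)) => [|t _]; last by rewrite dft_angle0 mulr0 cos0 expr1n.
  by rewrite sumr_const card_ord.
have [cos_sin_sum d_sin_sum] :
    \sum_(t < n) cos (t%:R * dft_angle n 0) * sin (t%:R * dft_angle n 0) = 0 /\
    \sum_(t < n) d t * sin (t%:R * dft_angle n 0) = 0.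
  by split; apply: big1 => t _; rewrite sin_eq0 mulr0.
have := bessel_orthogonal2 d cos_sin_sum.
by rewrite cmod_dft_sqr d_sin_sum cos_sqr_sum expr0n /= !mul0r !addr0.
Qed.

Lemma cmod_dft_sqr_le n (d : 'I_n -> R) f : (0 < f)%N -> (f.*2 < n)%N ->
  2 * cmod (dft d f) ^+ 2 <= \sum_t d t ^+ 2.
Proof.
move=> f_gt0 f2n; have n_gt0 : (0 < n)%N := leq_ltn_trans (leq0n _) f2n.
have [cos_sqr_sum sin_sqr_sum cos_sin_sum] := sum_cos_sin_sqr
  (sin_dft_angle_neq0 f_gt0 f2n) (sin_natmul_dft_angle f n_gt0).
have := bessel_orthogonal2 d cos_sin_sum; rewrite cos_sqr_sum sin_sqr_sum cmod_dft_sqr.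
by congr (_ <= _); field; rewrite pnatr_eq0 -lt0n.
Qed.
End DFT.

Theorem mainTheorem1 (R : realType) (n : nat) (x q : 'I_n -> R) (eps : R)
    (k : nat) :
  (3 <= n)%N -> 0 < eps -> (1 <= k)%N -> (k.*2 < n)%N ->
  eucl_dist x q < eps ->
  (* |X_0 - Q_0| < eps and |X_f - Q_f| < eps / sqrt 2 for f = 1..k *)
  (cmod (dft x 0 - dft q 0) < eps /\
   (forall f : nat, (1 <= f <= k)%N ->
      cmod (dft x f - dft q f) < eps / Num.sqrt 2)) /\
  (* box containment in the real coordinates of (X_0, ..., X_k) *)
  (`|complex.Re (dft x 0) - complex.Re (dft q 0) : R| < eps /\
   (forall f : nat, (1 <= f <= k)%N ->
      `|complex.Re (dft x f) - complex.Re (dft q f) : R| < eps / Num.sqrt 2 /\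
      `|complex.Im (dft x f) - complex.Im (dft q f) : R| < eps / Num.sqrt 2)).
Proof.
move=> _ _ _ k2n; pose d t := x t - q t.
rewrite /eucl_dist (eq_bigr (fun t => d t ^+ 2)) => [dist_lt|t _]; last first.
  exact: real_normK (num_real _).
have box f (m : R) : 0 < m -> m * cmod (dft d f) ^+ 2 <= \sum_t d t ^+ 2 ->
    [/\ cmod (dft x f - dft q f) < eps / Num.sqrt m,
        `|complex.Re (dft x f) - complex.Re (dft q f)| < eps / Num.sqrt m &
        `|complex.Im (dft x f) - complex.Im (dft q f)| < eps / Num.sqrt m].
  by move=> m_gt0 le_sum; rewrite -ReB -ImB dftB; apply: cmod_Re_Im_lt le_sum dist_lt.
have [|cmod0 Re0 _] := box 0%N 1 ltr01; first by rewrite mul1r cmod_dft0_sqr_le.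
rewrite sqrtr1 divr1 in cmod0 Re0.
have box2 f : (1 <= f <= k)%N ->
    [/\ cmod (dft x f - dft q f) < eps / Num.sqrt 2,
        `|complex.Re (dft x f) - complex.Re (dft q f)| < eps / Num.sqrt 2 &
        `|complex.Im (dft x f) - complex.Im (dft q f)| < eps / Num.sqrt 2].
  move=> /andP[f_gt0 le_fk]; apply: box => //; apply: cmod_dft_sqr_le f_gt0 _.
  by rewrite (leq_ltn_trans _ k2n) ?leq_double.
by split; split=> // f /box2[].
Qed.
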